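(* Let $b\ge 0$ and consider the polynomial system (the case $a=c=0$) $$\dot x=x(1-y),\qquad \dot y=y(-1+x),\qquad \dot z=-bz.$$ (i) If $b=0$, the system is Darboux integrable with the first integrals $H_1=xy\exp(-x-y)$ and $H_2=z$. (ii) If $b>0$, the system is integrable with the first integrals $H_1=xy\exp(-x-y)$ and $H_2=z\,h(x,y)$, where $$h(x,y)=\exp\left(\int^{x}\frac{b}{s\left(W\!\left(-\frac{xy\,e^{s-x-y}}{s}\right)+1\right)}\,ds\right),$$ and $W$ denotes the principal branch of the Lambert $W$ function.
   Context: A first integral of a vector field $\mathcal{X}$ on an open set $U$ is a non-constant function $H$ with $\mathcal{X}H=0$ on $U$. Darboux integrable means having first integrals of Darboux type, i.e. of the form $f_1^{\lambda_1}\cdots f_p^{\lambda_p}E_1^{\mu_1}\cdots E_q^{\mu_q}$ with $f_i$ Darboux polynomials, $E_j$ exponential factors and $\lambda_i,\mu_j\in\mathbb{C}$. *)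

From Stdlib Require Import Reals ClassicalEpsilon.
From Coquelicot Require Import Coquelicot.
Open Scope R_scope.

Definition pt3 := ((R * R) * R)%type.

Definition pdx (H : R -> R -> R -> R) x y z := Derive (fun t => H t y z) x.
Definition pdy (H : R -> R -> R -> R) x y z := Derive (fun t => H x t z) y.
Definition pdz (H : R -> R -> R -> R) x y z := Derive (fun t => H x y t) z.

Definition C1_on (U : pt3 -> Prop) (H : R -> R -> R -> R) : Prop :=
  forall x y z, U (x, y, z) ->
    ex_derive (fun t => H t y z) x /\ ex_derive (fun t => H x t z) y /\
    ex_derive (fun t => H x y t) z /\
    continuous (fun q : pt3 => pdx H (fst (fst q)) (snd (fst q)) (snd q)) (x, y, z) /\
    continuous (fun q : pt3 => pdy H (fst (fst q)) (snd (fst q)) (snd q)) (x, y, z) /\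
    continuous (fun q : pt3 => pdz H (fst (fst q)) (snd (fst q)) (snd q)) (x, y, z).

Definition lie (P Q S H : R -> R -> R -> R) x y z : R :=
  P x y z * pdx H x y z + Q x y z * pdy H x y z + S x y z * pdz H x y z.

Definition first_integral_on (U : pt3 -> Prop) (P Q S H : R -> R -> R -> R) : Prop :=
  open U /\ C1_on U H /\
  (exists p q : pt3, U p /\ U q /\
     H (fst (fst p)) (snd (fst p)) (snd p) <> H (fst (fst q)) (snd (fst q)) (snd q)) /\
  (forall x y z, U (x, y, z) -> lie P Q S H x y z = 0).

Fixpoint sumR (n : nat) (F : nat -> R) : R :=
  match n with O => 0 | S n => sumR n F + F n end.
Fixpoint prodR (n : nat) (F : nat -> R) : R :=
  match n with O => 1 | S n => prodR n F * F n end.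

Definition poly3_deg_le (d : nat) (f : R -> R -> R -> R) : Prop :=
  exists (n : nat) (c : nat -> nat -> nat -> R),
    (forall i j k, (d < i + j + k)%nat -> c i j k = 0) /\
    forall x y z, f x y z =
      sumR n (fun i => sumR n (fun j => sumR n (fun k =>
        c i j k * x ^ i * y ^ j * z ^ k))).

Definition poly3 (f : R -> R -> R -> R) : Prop := exists d, poly3_deg_le d f.

Definition nonconstant3 (f : R -> R -> R -> R) : Prop :=
  exists x y z x' y' z', f x y z <> f x' y' z'.

Definition coprime3 (g h : R -> R -> R -> R) : Prop :=
  forall d, poly3 d ->
    (exists q, poly3 q /\ forall x y z, g x y z = d x y z * q x y z) ->
    (exists q, poly3 q /\ forall x y z, h x y z = d x y z * q x y z) ->
    ~ nonconstant3 d.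

Definition darboux_poly (m : nat) (P Q S f : R -> R -> R -> R) : Prop :=
  poly3 f /\ nonconstant3 f /\
  exists K, poly3_deg_le (m - 1) K /\
    forall x y z, lie P Q S f x y z = K x y z * f x y z.

Definition exp_factor (m : nat) (P Q S g h : R -> R -> R -> R) : Prop :=
  poly3 g /\ poly3 h /\ coprime3 g h /\
  exists L, poly3_deg_le (m - 1) L /\
    forall x y z, h x y z <> 0 ->
      lie P Q S (fun x y z => exp (g x y z / h x y z)) x y z
        = L x y z * exp (g x y z / h x y z).

(** H is of Darboux type on U: H = f_1^l_1 ... f_p^l_p E_1^mu_1 ... E_q^mu_q,
    E_j = exp(g_j/h_j). (Exponents l_i restricted to naturals.) *)
Definition darboux_type_on (m : nat) (U : pt3 -> Prop) (P Q S H : R -> R -> R -> R) : Prop :=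
  exists (p q : nat) (f : nat -> R -> R -> R -> R) (lam : nat -> nat)
         (g h : nat -> R -> R -> R -> R) (mu : nat -> R),
    (forall i, (i < p)%nat -> darboux_poly m P Q S (f i)) /\
    (forall j, (j < q)%nat -> exp_factor m P Q S (g j) (h j)) /\
    forall x y z, U (x, y, z) ->
      (forall j, (j < q)%nat -> h j x y z <> 0) /\
      H x y z = prodR p (fun i => f i x y z ^ lam i) *
                prodR q (fun j => exp (mu j * (g j x y z / h j x y z))).

(** Principal branch of the Lambert W function: for z >= -1/e, the unique
    w >= -1 with w e^w = z (unspecified value outside the domain). *)
Definition LambertW (z : R) : R :=
  epsilon (inhabits 0) (fun w => -1 <= w /\ w * exp w = z).

Definition Px (x y z : R) : R := x * (1 - y).
Definition Qy (x y z : R) : R := y * (-1 + x).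
Definition Sz (b : R) (x y z : R) : R := - b * z.

Definition H1 (x y z : R) : R := x * y * exp (- x - y).

(** h(x,y) = exp( int_{x0}^x b / (s (W(-xy e^{s-x-y}/s) + 1)) ds ),
    with base point x0 of the indefinite integral. *)
Definition hfun (b x0 x y : R) : R :=
  exp (RInt (fun s => b / (s * (LambertW (- (x * y * exp (s - x - y) / s)) + 1))) x0 x).

(** [H1 = x y e^(-x-y)] is the classical first integral of the
    Lotka-Volterra part: [X H1 = 0] by a direct computation.  For [b = 0] it is
    the product of the Darboux polynomials [x], [y] and the exponential factor
    [exp (-x-y)], whose denominator [1] is coprime to every polynomial since a
    polynomial unit is constant (restrict to lines and use univariate polynomials).

    For [b > 0] we work on [x > 0, y < 0], where [c := H1 < 0].  The integrand
    of [h] depends on [(x, y)] only through [c]: it is [psi c s =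
    b / (s (W (-c e^s / s) + 1))].  Differentiating [G = int_1^x psi (H1 x y) s ds]
    under the integral sign gives
    [X G = (X H1) int_1^x d_c psi + P psi (H1 x y) x = b],
    because at [s = x] the Lambert equation is solved by [W = -y].
    Hence [X (z e^G) = z e^G (X G) - b z e^G = 0]. *)

From Stdlib Require Import Reals Lra Lia ClassicalEpsilon Ranalysis5.
From Coquelicot Require Import Coquelicot.
From mathcomp Require ssreflect ssrbool eqtype ssrnat seq fintype bigop ssralg ssrnum poly Rstruct.
Open Scope R_scope.

Module UnivariatePoly.
Import ssreflect ssrbool eqtype ssrnat seq fintype bigop ssralg ssrnum poly Rstruct.
Import GRing.Theory Num.Theory.
Local Open Scope ring_scope.

Lemma poly_eq0_of_horner (p : {poly R}) : (forall t, p.[t] = 0) -> p = 0.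
Proof.
move=> p_root; apply/eqP; apply/negPn/negP => p_neq0.
suff : false by [].
have := @max_poly_roots _ p [seq i%:R | i <- iota 0 (size p)] p_neq0.
rewrite size_map size_iota ltnn; apply.
- by apply/allP => t _; apply/rootP.
- by rewrite map_inj_uniq ?iota_uniq // => i j /eqP; rewrite eqr_nat => /eqP.
Qed.

Lemma horner_const_of_unit (D E : {poly R}) :
  (forall t, D.[t] * E.[t] = 1) -> forall t, D.[t] = D.[0].
Proof.
move=> DE1 t.
have DE : D * E = 1.
  by apply/eqP; rewrite -subr_eq0; apply/eqP/poly_eq0_of_horner => s;
     rewrite hornerD hornerN hornerM DE1 hornerC subrr.
have /andP[/eqP sizeD _] : D \in GRing.unit by apply/unitrPr; exists E.
by rewrite (size1_polyC (eq_leq sizeD)) !hornerC.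
Qed.

Lemma sumR_big n (F : nat -> R) : sumR n F = \sum_(i < n) F i.
Proof. by elim: n => [|n IH] /=; rewrite ?big_ord0 // big_ord_recr IH. Qed.

Lemma pow_exprn (x : R) n : Rpow_def.pow x n = x ^+ n.
Proof. by elim: n => [|n IH] //=; rewrite exprS IH. Qed.

Local Close Scope ring_scope.

Lemma poly3_restrict_line f x y z u v w : poly3 f ->
  exists P : {poly R}, forall t, horner P t = f (x + t * u) (y + t * v) (z + t * w).
Proof.
move=> [_ [n [c [_ f_eq]]]].
exists (\sum_(i < n) \sum_(j < n) \sum_(k < n)
  ((c i j k)%:P * (x%:P + 'X * u%:P) ^+ i * (y%:P + 'X * v%:P) ^+ j
    * (z%:P + 'X * w%:P) ^+ k))%R => t.
rewrite f_eq !sumR_big horner_sum; apply: eq_bigr => i _.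
rewrite !sumR_big horner_sum; apply: eq_bigr => j _.
rewrite !sumR_big horner_sum; apply: eq_bigr => k _.
by rewrite !hornerE !pow_exprn.
Qed.

End UnivariatePoly.

Lemma poly3_unit_not_nonconstant d q : poly3 d -> poly3 q ->
  (forall x y z, 1 = d x y z * q x y z) -> ~ nonconstant3 d.
Proof.
intros Pd Pq dq1 [x [y [z [x' [y' [z' d_neq]]]]]].
destruct (UnivariatePoly.poly3_restrict_line d x y z (x' - x) (y' - y) (z' - z) Pd) as [D HD].
destruct (UnivariatePoly.poly3_restrict_line q x y z (x' - x) (y' - y) (z' - z) Pq) as [E HE].
assert (D_const := UnivariatePoly.horner_const_of_unit D E).
assert (at0 : d x y z = poly.horner D 0) by (rewrite HD; f_equal; ring).
assert (at1 : d x' y' z' = poly.horner D 1) by (rewrite HD; f_equal; ring).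
apply d_neq; rewrite at0, at1; symmetry; apply D_const.
intros t; rewrite HD, HE; symmetry; apply dq1.
Qed.

Lemma continuous_Rplus {U : UniformSpace} (f g : U -> R) p :
  continuous f p -> continuous g p -> continuous (fun q => f q + g q) p.
Proof. apply (continuous_plus f g). Qed.

Lemma continuous_Rminus {U : UniformSpace} (f g : U -> R) p :
  continuous f p -> continuous g p -> continuous (fun q => f q - g q) p.
Proof. apply (continuous_minus f g). Qed.

Lemma continuous_Ropp {U : UniformSpace} (f : U -> R) p :
  continuous f p -> continuous (fun q => - f q) p.
Proof. apply (continuous_opp f). Qed.

Lemma continuous_Rmult {U : UniformSpace} (f g : U -> R) p :
  continuous f p -> continuous g p -> continuous (fun q => f q * g q) p.
Proof. apply (continuous_mult f g). Qed.

Lemma continuous_Rdiv {U : UniformSpace} (f g : U -> R) p :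
  continuous f p -> continuous g p -> g p <> 0 -> continuous (fun q => f q / g q) p.
Proof.
intros cf cg gp; apply (continuous_Rmult f (fun q => / g q)); [exact cf |].
apply (continuous_comp g Rinv); [exact cg | now apply continuous_Rinv].
Qed.

Lemma continuous_Rpow {U : UniformSpace} (f : U -> R) p n :
  continuous f p -> continuous (fun q => f q ^ n) p.
Proof.
intros cf; induction n as [|n IH]; simpl.
- apply continuous_const.
- now apply continuous_Rmult.
Qed.

Lemma continuous_Rexp {U : UniformSpace} (f : U -> R) p :
  continuous f p -> continuous (fun q => exp (f q)) p.
Proof.
intros cf; apply (continuous_comp f exp); [exact cf |].
assert (d_exp : ex_derive exp (f p)) by (auto_derive; auto).
exact (ex_derive_continuous _ _ d_exp).
Qed.

Definition at3 (f : R -> R -> R -> R) (q : pt3) : R := f (fst (fst q)) (snd (fst q)) (snd q).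

Lemma continuous_fst_at {U V : UniformSpace} (p : U * V) : continuous fst p.
Proof. destruct p; apply continuous_fst. Qed.

Lemma continuous_snd_at {U V : UniformSpace} (p : U * V) : continuous snd p.
Proof. destruct p; apply continuous_snd. Qed.

Ltac continuity_R := repeat match goal with
  | |- continuous (fun _ => _) _ => apply continuous_const
  | |- continuous (fun q => q) _ => apply continuous_id
  | |- continuous fst _ => apply continuous_fst_at
  | |- continuous snd _ => apply continuous_snd_at
  | |- continuous (fun q => fst (@?f q)) _ => apply (continuous_comp f fst)
  | |- continuous (fun q => snd (@?f q)) _ => apply (continuous_comp f snd)
  | |- continuous (fun q => @?f q + @?g q) _ => apply (continuous_Rplus f g)
  | |- continuous (fun q => @?f q - @?g q) _ => apply (continuous_Rminus f g)
  | |- continuous (fun q => - @?f q) _ => apply (continuous_Ropp f)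
  | |- continuous (fun q => @?f q * @?g q) _ => apply (continuous_Rmult f g)
  | |- continuous (fun q => @?f q / @?g q) _ => apply (continuous_Rdiv f g)
  | |- continuous (fun q => exp (@?f q)) _ => apply (continuous_Rexp f)
  | |- continuous (fun q => @?f q ^ ?n) _ => apply (continuous_Rpow f _ n)
  end.

Ltac ring_R := match goal with |- ?a = ?b => change (@eq R a b); unfold Rminus, Rdiv; ring end.

Lemma lie_of_is_derive P Q S H x y z hx hy hz :
  is_derive (fun t => H t y z) x hx -> is_derive (fun t => H x t z) y hy ->
  is_derive (fun t => H x y t) z hz ->
  lie P Q S H x y z = P x y z * hx + Q x y z * hy + S x y z * hz.
Proof.
intros dx dy dz; unfold lie.
replace (pdx H x y z) with hx by (symmetry; now apply is_derive_unique).
replace (pdy H x y z) with hy by (symmetry; now apply is_derive_unique).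
replace (pdz H x y z) with hz by (symmetry; now apply is_derive_unique).
reflexivity.
Qed.

Lemma first_integral_on_intro (U : pt3 -> Prop) P Q S H Hx Hy Hz :
  open U ->
  (forall x y z, U (x, y, z) ->
     is_derive (fun t => H t y z) x (Hx x y z) /\
     is_derive (fun t => H x t z) y (Hy x y z) /\
     is_derive (fun t => H x y t) z (Hz x y z)) ->
  (forall p, U p -> continuous (at3 Hx) p /\ continuous (at3 Hy) p /\ continuous (at3 Hz) p) ->
  (exists p q, U p /\ U q /\ at3 H p <> at3 H q) ->
  (forall x y z, U (x, y, z) ->
     P x y z * Hx x y z + Q x y z * Hy x y z + S x y z * Hz x y z = 0) ->
  first_integral_on U P Q S H.
Proof.
intros U_open H_derive H_cont H_nonconst H_lie.
assert (partials : forall p, U p ->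
  at3 (pdx H) p = at3 Hx p /\ at3 (pdy H) p = at3 Hy p /\ at3 (pdz H) p = at3 Hz p).
{ intros [[x y] z] Up; destruct (H_derive x y z Up) as (dx & dy & dz).
  unfold at3; simpl; repeat split; now apply is_derive_unique. }
assert (near_partial : forall p (f g : R -> R -> R -> R), U p ->
  (forall q, U q -> at3 f q = at3 g q) -> locally p (fun q => at3 g q = at3 f q)).
{ intros p f g Up fg; apply (filter_imp U); [| now apply U_open].
  intros q Uq; symmetry; now apply fg. }
split; [exact U_open | split; [| split; [exact H_nonconst |]]].
- intros x y z Up; destruct (H_derive x y z Up) as (dx & dy & dz).
  destruct (H_cont _ Up) as (cx & cy & cz).
  repeat split; try (eexists; eassumption).
  + apply (continuous_ext_loc _ (at3 Hx)); [| exact cx].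
    exact (near_partial _ (pdx H) Hx Up (fun q Uq => proj1 (partials q Uq))).
  + apply (continuous_ext_loc _ (at3 Hy)); [| exact cy].
    exact (near_partial _ (pdy H) Hy Up (fun q Uq => proj1 (proj2 (partials q Uq)))).
  + apply (continuous_ext_loc _ (at3 Hz)); [| exact cz].
    exact (near_partial _ (pdz H) Hz Up (fun q Uq => proj2 (proj2 (partials q Uq)))).
- intros x y z Up; destruct (H_derive x y z Up) as (dx & dy & dz).
  rewrite (lie_of_is_derive _ _ _ _ _ _ _ _ _ _ dx dy dz); now apply H_lie.
Qed.

Lemma is_derive_H1_x x y z : is_derive (fun t => H1 t y z) x (y * exp (- x - y) * (1 - x)).
Proof. unfold H1; auto_derive; auto; ring_R. Qed.

Lemma is_derive_H1_y x y z : is_derive (fun t => H1 x t z) y (x * exp (- x - y) * (1 - y)).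
Proof. unfold H1; auto_derive; auto; ring_R. Qed.

Lemma is_derive_H1_z x y z : is_derive (fun t => H1 x y t) z 0.
Proof. unfold H1; auto_derive; auto. Qed.

Lemma Px_H1x_plus_Qy_H1y x y z :
  Px x y z * (y * exp (- x - y) * (1 - x)) + Qy x y z * (x * exp (- x - y) * (1 - y)) = 0.
Proof. unfold Px, Qy; ring. Qed.

Lemma H1_first_integral_on (U : pt3 -> Prop) b :
  open U -> (exists p q, U p /\ U q /\ at3 H1 p <> at3 H1 q) ->
  first_integral_on U Px Qy (Sz b) H1.
Proof.
intros U_open nonconst.
apply (first_integral_on_intro U _ _ _ _ (fun x y z => y * exp (- x - y) * (1 - x))
  (fun x y z => x * exp (- x - y) * (1 - y)) (fun _ _ _ => 0)); auto.
- intros x y z _; auto using is_derive_H1_x, is_derive_H1_y, is_derive_H1_z.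
- intros p _; unfold at3; repeat split; continuity_R.
- intros x y z _; rewrite Rmult_0_r, Rplus_0_r; apply Px_H1x_plus_Qy_H1y.
Qed.

Lemma H1_takes_two_values : at3 H1 (1, -1, 0) <> at3 H1 (2, -2, 0).
Proof.
unfold at3, H1; simpl.
replace (- (1) - -1) with 0 by ring; replace (- (2) - -2) with 0 by ring.
rewrite exp_0; lra.
Qed.

Lemma z_first_integral : first_integral_on (fun _ => True) Px Qy (Sz 0) (fun _ _ z => z).
Proof.
apply (first_integral_on_intro _ _ _ _ _ (fun _ _ _ => 0) (fun _ _ _ => 0) (fun _ _ _ => 1)).
- apply open_true.
- intros x y z _; split; [| split]; auto_derive; auto.
- intros p _; repeat split; apply continuous_const.
- exists (0, 0, 0), (0, 0, 1); unfold at3; simpl; repeat split; lra.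
- intros x y z _; unfold Sz; ring.
Qed.

Lemma poly3_deg_le_affine (a0 a1 a2 a3 : R) :
  poly3_deg_le 1 (fun x y z => a0 + a1 * x + a2 * y + a3 * z).
Proof.
exists 2%nat, (fun i j k => match i, j, k with
  | O, O, O => a0 | 1, O, O => a1 | O, 1, O => a2 | O, O, 1 => a3 | _, _, _ => 0 end).
split.
- intros [|[|i]] [|[|j]] [|[|k]] deg; simpl in *; lia || reflexivity.
- intros x y z; simpl; ring.
Qed.

Lemma poly3_deg_le_ext d f g :
  poly3_deg_le d f -> (forall x y z, g x y z = f x y z) -> poly3_deg_le d g.
Proof.
intros [n [c [c_deg f_eq]]] gf; exists n, c; split; [exact c_deg |].
intros x y z; rewrite gf; apply f_eq.
Qed.

Ltac poly3_affine a0 a1 a2 a3 :=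
  apply (poly3_deg_le_ext 1 _ _ (poly3_deg_le_affine a0 a1 a2 a3)); intros; ring.

Lemma darboux_poly_x b : darboux_poly 2 Px Qy (Sz b) (fun x _ _ => x).
Proof.
split; [exists 1%nat; poly3_affine 0 1 0 0 | split].
- exists 0, 0, 0, 1, 0, 0; lra.
- exists (fun _ y _ => 1 - y); split; [poly3_affine 1 0 (-1) 0 |].
  intros x y z; rewrite (lie_of_is_derive _ _ _ _ _ _ _ 1 0 0); try (auto_derive; auto).
  unfold Px, Qy, Sz; ring.
Qed.

Lemma darboux_poly_y b : darboux_poly 2 Px Qy (Sz b) (fun _ y _ => y).
Proof.
split; [exists 1%nat; poly3_affine 0 0 1 0 | split].
- exists 0, 0, 0, 0, 1, 0; lra.
- exists (fun x _ _ => -1 + x); split; [poly3_affine (-1) 1 0 0 |].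
  intros x y z; rewrite (lie_of_is_derive _ _ _ _ _ _ _ 0 1 0); try (auto_derive; auto).
  unfold Px, Qy, Sz; ring.
Qed.

Lemma darboux_poly_z b : darboux_poly 2 Px Qy (Sz b) (fun _ _ z => z).
Proof.
split; [exists 1%nat; poly3_affine 0 0 0 1 | split].
- exists 0, 0, 0, 0, 0, 1; lra.
- exists (fun _ _ _ => - b); split; [poly3_affine (- b) 0 0 0 |].
  intros x y z; rewrite (lie_of_is_derive _ _ _ _ _ _ _ 0 0 1); try (auto_derive; auto).
  unfold Px, Qy, Sz; ring.
Qed.

Lemma exp_factor_exp_neg_x_y b :
  exp_factor 2 Px Qy (Sz b) (fun x y _ => - x - y) (fun _ _ _ => 1).
Proof.
split; [exists 1%nat; poly3_affine 0 (-1) (-1) 0 |].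
split; [exists 1%nat; poly3_affine 1 0 0 0 |].
split.
- intros d d_poly _ [q [q_poly dq]]; exact (poly3_unit_not_nonconstant d q d_poly q_poly dq).
- exists (fun x y _ => y - x); split; [poly3_affine 0 (-1) 1 0 |].
  intros x y z _.
  assert (div1 : forall u v, exp ((- u - v) / 1) = exp (- u - v)) by (intros; f_equal; field).
  rewrite (lie_of_is_derive _ _ _ _ _ _ _ (- exp (- x - y)) (- exp (- x - y)) 0).
  + rewrite div1; unfold Px, Qy, Sz; ring.
  + apply (is_derive_ext (fun t => exp (- t - y))); [intros; now rewrite div1 |].
    auto_derive; auto; ring_R.
  + apply (is_derive_ext (fun t => exp (- x - t))); [intros; now rewrite div1 |].
    auto_derive; auto; ring_R.
  + auto_derive; auto.
Qed.

Lemma H1_darboux_type b : darboux_type_on 2 (fun _ => True) Px Qy (Sz b) H1.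
Proof.
exists 2%nat, 1%nat, (fun i => match i with O => (fun x _ _ => x) | _ => (fun _ y _ => y) end),
  (fun _ => 1%nat), (fun _ x y _ => - x - y), (fun _ _ _ _ => 1), (fun _ => 1).
split; [| split].
- intros [|[|i]] i_lt; [apply darboux_poly_x | apply darboux_poly_y | lia].
- intros j _; apply exp_factor_exp_neg_x_y.
- intros x y z _; split; [intros; lra |].
  unfold H1; simpl; replace (1 * ((- x - y) / 1)) with (- x - y) by field; ring.
Qed.

Lemma z_darboux_type b : darboux_type_on 2 (fun _ => True) Px Qy (Sz b) (fun _ _ z => z).
Proof.
exists 1%nat, 0%nat, (fun _ _ _ z => z), (fun _ => 1%nat), (fun _ _ _ _ => 0), (fun _ _ _ _ => 1),
  (fun _ => 1).
split; [| split].
- intros; apply darboux_poly_z.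
- intros; lia.
- intros x y z _; split; [intros; lia | simpl; ring].
Qed.

Definition xexp (w : R) : R := w * exp w.

Lemma derivable_pt_lim_xexp w : derivable_pt_lim xexp w (exp w * (1 + w)).
Proof. apply is_derive_Reals; unfold xexp; auto_derive; auto; ring_R. Qed.

Lemma continuity_xexp : continuity xexp.
Proof. intros w; apply derivable_continuous_pt; eexists; apply derivable_pt_lim_xexp. Qed.

Lemma xexp_increasing u v : 0 <= u -> u < v -> xexp u < xexp v.
Proof.
intros u_ge0 uv; unfold xexp.
assert (exp u < exp v) by (apply exp_increasing; lra).
assert (0 < exp u) by apply exp_pos.
nra.
Qed.

Lemma xexp_pos v : 0 < v -> 0 < xexp v.
Proof. intros v_pos; unfold xexp; assert (0 < exp v) by apply exp_pos; nra. Qed.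

Lemma LambertW_spec u : 0 < u -> 0 < LambertW u /\ xexp (LambertW u) = u.
Proof.
intros u_pos.
assert (root : exists w, -1 <= w /\ w * exp w = u).
{ destruct (IVT (fun w => xexp w - u) 0 (u + 1)) as [w [w_range w_root]].
  - intros w; apply continuity_pt_minus; [apply continuity_xexp | apply continuity_pt_const].
    now intros ? ?.
  - lra.
  - unfold xexp; rewrite Rmult_0_l; lra.
  - unfold xexp; assert (T := exp_ineq1_le (u + 1)); nra.
  - exists w; split; [lra |]; unfold xexp in w_root; lra. }
destruct (epsilon_spec (inhabits 0) _ root) as [W_ge W_eq]; fold (LambertW u) in W_ge, W_eq.
split; [| exact W_eq].
destruct (Rle_or_lt (LambertW u) 0) as [W_le0 | W_pos]; [| exact W_pos].
assert (0 < exp (LambertW u)) by apply exp_pos; nra.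
Qed.

Lemma LambertW_xexp v : 0 < v -> LambertW (xexp v) = v.
Proof.
intros v_pos; destruct (LambertW_spec _ (xexp_pos v v_pos)) as [W_pos W_eq].
destruct (Rtotal_order (LambertW (xexp v)) v) as [lt | [eq | gt]]; [| exact eq |].
- assert (T := xexp_increasing _ _ (Rlt_le _ _ W_pos) lt); lra.
- assert (T := xexp_increasing _ _ (Rlt_le _ _ v_pos) gt); lra.
Qed.

Lemma LambertW_le u v : 0 < u -> u <= v -> LambertW u <= LambertW v.
Proof.
intros u_pos uv.
destruct (LambertW_spec u u_pos) as [Wu_pos Wu_eq], (LambertW_spec v ltac:(lra)) as [Wv_pos Wv_eq].
destruct (Rle_or_lt (LambertW u) (LambertW v)) as [le | lt]; [exact le |].
assert (T := xexp_increasing _ _ (Rlt_le _ _ Wv_pos) lt); lra.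
Qed.

Lemma continuity_pt_LambertW u : 0 < u -> continuity_pt LambertW u.
Proof.
intros u_pos; destruct (LambertW_spec u u_pos) as [W_pos W_eq].
set (lb := LambertW u / 2); set (ub := LambertW u + 1).
assert (lb_pos : 0 < lb) by (unfold lb; lra).
assert (xexp_lb_pos := xexp_pos lb lb_pos).
apply (continuity_pt_recip_interv xexp LambertW lb ub).
- unfold lb, ub; lra.
- intros a c lb_a ac _; apply xexp_increasing; lra.
- intros a lb_a _; unfold comp, id; apply LambertW_spec; lra.
- intros a lb_a a_ub; rewrite <- (LambertW_xexp lb), <- (LambertW_xexp ub) by (unfold ub; lra).
  split; apply LambertW_le; lra.
- intros a _; apply continuity_xexp.
- rewrite <- W_eq; split; apply xexp_increasing; unfold lb, ub; lra.
Qed.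

Lemma is_derive_LambertW u : 0 < u ->
  is_derive LambertW u (LambertW u / (u * (1 + LambertW u))).
Proof.
intros u_pos; destruct (LambertW_spec u u_pos) as [W_pos W_eq].
apply is_derive_Reals.
assert (xexp_derivable : forall a, LambertW (u / 2) <= a <= LambertW (2 * u) -> derivable_pt xexp a)
  by (intros a _; eexists; apply derivable_pt_lim_xexp).
assert (W_between : LambertW (u / 2) <= LambertW u <= LambertW (2 * u))
  by (split; apply LambertW_le; lra).
assert (inverse := derivable_pt_lim_recip_interv xexp LambertW (u / 2) (2 * u) u xexp_derivable
  (continuity_pt_LambertW u u_pos) ltac:(lra) ltac:(lra) W_between).
rewrite (derive_pt_eq_0 _ _ _ _ (derivable_pt_lim_xexp (LambertW u))) in inverse.
assert (0 < exp (LambertW u)) by apply exp_pos.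
replace (LambertW u / (u * (1 + LambertW u))) with (1 / (exp (LambertW u) * (1 + LambertW u))).
- apply inverse; [intros a a_range; unfold comp, id; apply LambertW_spec; lra |].
  apply Rgt_not_eq, Rmult_lt_0_compat; lra.
- set (w := LambertW u) in *; rewrite <- W_eq; unfold xexp; field; split; lra.
Qed.

Definition Wc (c s : R) : R := LambertW (- (c * exp s / s)).

Definition psi (b c s : R) : R := b / (s * (Wc c s + 1)).

Definition dpsi (b c s : R) : R := - b * Wc c s / (s * c * (1 + Wc c s) ^ 3).

Lemma Wc_arg_pos c s : c < 0 -> 0 < s -> 0 < - (c * exp s / s).
Proof.
intros c_neg s_pos; assert (0 < exp s) by apply exp_pos.
assert (0 < - c * exp s / s) by (apply Rdiv_lt_0_compat; nra).
replace (- (c * exp s / s)) with (- c * exp s / s) by (field; lra); lra.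
Qed.

Lemma Wc_pos c s : c < 0 -> 0 < s -> 0 < Wc c s.
Proof. intros c_neg s_pos; apply LambertW_spec, Wc_arg_pos; assumption. Qed.

Lemma is_derive_Wc c s : c < 0 -> 0 < s ->
  is_derive (fun c => Wc c s) c (Wc c s / (c * (1 + Wc c s))).
Proof.
intros c_neg s_pos; assert (W_pos := Wc_pos c s c_neg s_pos); unfold Wc in *.
assert (0 < exp s) by apply exp_pos.
replace (LambertW (- (c * exp s / s)) / (c * (1 + LambertW (- (c * exp s / s)))))
  with (scal (- (exp s / s)) (LambertW (- (c * exp s / s))
          / (- (c * exp s / s) * (1 + LambertW (- (c * exp s / s)))))).
- apply (is_derive_comp LambertW (fun c => - (c * exp s / s))).
  + now apply is_derive_LambertW, Wc_arg_pos.
  + auto_derive; [lra | ring_R].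
- unfold scal; simpl; unfold mult; simpl; field; repeat split; lra.
Qed.

Lemma is_derive_psi b c s : c < 0 -> 0 < s ->
  is_derive (fun c => psi b c s) c (dpsi b c s).
Proof.
intros c_neg s_pos; assert (W_pos := Wc_pos c s c_neg s_pos).
unfold psi, dpsi.
replace (- b * Wc c s / (s * c * (1 + Wc c s) ^ 3))
  with (scal (Wc c s / (c * (1 + Wc c s))) (- b * s / (s * (Wc c s + 1)) ^ 2)).
- apply (is_derive_comp (fun w => b / (s * (w + 1))) (fun c => Wc c s)).
  + auto_derive; [nra | field; nra].
  + now apply is_derive_Wc.
- unfold scal; simpl; unfold mult; simpl; field; repeat split; lra.
Qed.

Lemma continuous_Wc c s : c < 0 -> 0 < s ->
  continuous (fun w : R * R => Wc (fst w) (snd w)) (c, s).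
Proof.
intros c_neg s_pos; unfold Wc.
apply (continuous_comp (fun w : R * R => - (fst w * exp (snd w) / snd w)) LambertW).
- continuity_R; simpl; lra.
- assert (d_W : ex_derive LambertW (- (c * exp s / s)))
    by (eexists; apply is_derive_LambertW, Wc_arg_pos; assumption).
  exact (ex_derive_continuous _ _ d_W).
Qed.

Lemma continuous_psi b c s : c < 0 -> 0 < s ->
  continuous (fun w : R * R => psi b (fst w) (snd w)) (c, s).
Proof.
intros c_neg s_pos; assert (W_pos := Wc_pos c s c_neg s_pos); unfold psi.
apply continuous_Rdiv; simpl; [continuity_R | | nra].
apply continuous_Rmult; [continuity_R |].
apply continuous_Rplus; [now apply continuous_Wc | continuity_R].
Qed.

Lemma continuous_dpsi b c s : c < 0 -> 0 < s ->
  continuous (fun w : R * R => dpsi b (fst w) (snd w)) (c, s).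
Proof.
intros c_neg s_pos; assert (W_pos := Wc_pos c s c_neg s_pos); unfold dpsi.
assert (cW := continuous_Wc c s c_neg s_pos).
apply continuous_Rdiv.
- apply continuous_Rmult; [continuity_R | exact cW].
- apply continuous_Rmult; [continuity_R |].
  apply continuous_Rpow, continuous_Rplus; [continuity_R | exact cW].
- simpl fst; simpl snd; assert (0 < (1 + Wc c s) ^ 3) by (apply pow_lt; lra).
  assert (0 < s * - c * (1 + Wc c s) ^ 3) by (apply Rmult_lt_0_compat; nra).
  nra.
Qed.

Lemma H1_neg x y z : 0 < x -> y < 0 -> H1 x y z < 0.
Proof.
intros x_pos y_neg; unfold H1; assert (0 < exp (- x - y)) by apply exp_pos.
assert (0 < x * - y * exp (- x - y)) by (apply Rmult_lt_0_compat; nra); nra.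
Qed.

Lemma Px_psi_H1_diag b x y z : 0 < x -> y < 0 -> Px x y z * psi b (H1 x y z) x = b.
Proof.
intros x_pos y_neg.
assert (W_diag : Wc (H1 x y z) x = - y).
{ unfold Wc, H1; rewrite <- (LambertW_xexp (- y)) by lra; f_equal; unfold xexp.
  replace (- y) with (- x - y + x) at 2 by ring; rewrite exp_plus; field; lra. }
unfold psi, Px; rewrite W_diag; field; lra.
Qed.

Lemma locally_uniformly_close {U : UniformSpace} (f : U -> R -> R) p a b (eps : posreal) :
  (forall t, a <= t <= b -> continuous (fun w : U * R => f (fst w) (snd w)) (p, t)) ->
  locally p (fun q => forall t, a <= t <= b -> Rabs (f q t - f p t) <= eps).
Proof.
intros f_cont.
set (e := pos_div_2 eps).
assert (delta_ex : forall t, exists d : posreal, a <= t <= b -> forall w : U * R,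
  ball (p, t) d w -> Rabs (f (fst w) (snd w) - f p t) < e).
{ intros t; destruct (classic (a <= t <= b)) as [t_in | t_out].
  - destruct (proj1 (filterlim_locally _ _) (f_cont t t_in) e) as [d close].
    exists d; intros _ w w_near; exact (close w w_near).
  - exists (mkposreal 1 Rlt_0_1); tauto. }
set (delta := fun t => proj1_sig (constructive_indefinite_description _ (delta_ex t))).
assert (delta_spec : forall t, a <= t <= b -> forall w : U * R,
  ball (p, t) (delta t) w -> Rabs (f (fst w) (snd w) - f p t) < e)
  by (intros t; exact (proj2_sig (constructive_indefinite_description _ (delta_ex t)))).
destruct (compactness_value_1d a b delta) as [d covered].
exists d; intros q q_near tau tau_in.
destruct (Rle_or_lt (Rabs (f q tau - f p tau)) eps) as [le | gt]; [exact le |].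
exfalso; apply (covered tau tau_in); intros [t [t_in [tau_t d_le]]].
assert (near_q : Rabs (f q tau - f p t) < e).
{ apply (delta_spec t t_in (q, tau)); split; [eapply ball_le; eassumption | exact tau_t]. }
assert (near_p : Rabs (f p tau - f p t) < e).
{ apply (delta_spec t t_in (p, tau)); split; [apply ball_center | exact tau_t]. }
apply Rabs_def2 in near_q; apply Rabs_def2 in near_p.
assert (Rabs (f q tau - f p tau) < eps) by (apply Rabs_def1; simpl in *; lra); lra.
Qed.

Lemma continuous_RInt_param {U : UniformSpace} (f : U -> R -> R) p a b : a <= b ->
  (forall t, a <= t <= b -> continuous (fun w : U * R => f (fst w) (snd w)) (p, t)) ->
  locally p (fun q => ex_RInt (f q) a b) ->
  continuous (fun q => RInt (f q) a b) p.
Proof.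
intros ab f_cont f_int; apply filterlim_locally; intros eps.
assert (eps'_pos : 0 < eps / (b - a + 1)) by (apply Rdiv_lt_0_compat; [apply cond_pos | lra]).
apply (filter_imp (fun q => ex_RInt (f q) a b /\
  forall t, a <= t <= b -> Rabs (f q t - f p t) <= mkposreal _ eps'_pos)).
2: { apply filter_and; [exact f_int | now apply locally_uniformly_close]. }
intros q [q_int q_close]; assert (p_int := locally_singleton _ _ f_int).
change (Rabs (RInt (f q) a b - RInt (f p) a b) < eps).
rewrite <- (@RInt_minus R_CompleteNormedModule) by assumption.
eapply Rle_lt_trans.
- apply abs_RInt_le_const; [exact ab | | exact q_close].
  now apply (@ex_RInt_minus R_NormedModule).
- simpl; apply (Rmult_lt_reg_r (b - a + 1)); [lra |].
  field_simplify; [| lra]; destruct eps as [eps eps_pos]; simpl; nra.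
Qed.

Lemma locally_pair {U V : UniformSpace} (P : U -> Prop) (Q : V -> Prop) x y :
  locally x P -> locally y Q -> locally (x, y) (fun w => P (fst w) /\ Q (snd w)).
Proof.
intros [d1 P_near] [d2 Q_near].
exists (mkposreal (Rmin d1 d2) (Rmin_pos _ _ (cond_pos d1) (cond_pos d2))).
intros [u v] [u_near v_near]; split.
- apply P_near; eapply ball_le; [apply Rmin_l | exact u_near].
- apply Q_near; eapply ball_le; [apply Rmin_r | exact v_near].
Qed.

Section IntegralWithParameter.

Variables (D : R -> Prop) (F : R -> R -> R).
Hypothesis D_open : open D.
Hypothesis F_cont : forall c s, D c -> 0 < s ->
  continuous (fun w : R * R => F (fst w) (snd w)) (c, s).

Lemma continuous_param_slice c s : D c -> 0 < s -> continuous (F c) s.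
Proof.
intros Dc s_pos.
apply (continuous_comp_2 (fun _ => c) (fun t => t) F); [apply continuous_const | apply continuous_id |].
now apply F_cont.
Qed.

Lemma ex_RInt_param_slice c a u : D c -> 0 < a -> 0 < u -> ex_RInt (F c) a u.
Proof.
intros Dc a_pos u_pos; apply (@ex_RInt_continuous R_CompleteNormedModule).
intros s s_in; apply continuous_param_slice; [exact Dc |].
assert (0 < Rmin a u) by (apply Rmin_pos; assumption); lra.
Qed.

Lemma continuous_RInt_param_bound c a u : D c -> 0 < a -> 0 < u ->
  continuous (fun w : R * R => RInt (F (fst w)) a (snd w)) (c, u).
Proof.
intros Dc a_pos u_pos.
(* [RInt (F c) a u = (u - a) * RInt (fun tau => F c ((u - a) * tau + a)) 0 1] moves the
   variable bound into the integrand. *)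
set (rescaled := fun (w : R * R) (tau : R) => F (fst w) ((snd w - a) * tau + a)).
assert (near_dom : locally (c, u) (fun w : R * R => D (fst w) /\ 0 < snd w))
  by (apply locally_pair; [now apply D_open | now apply open_gt]).
assert (rescaled_cont : forall w tau, D (fst w) -> 0 < snd w -> 0 <= tau <= 1 ->
  continuous (fun w' : (R * R) * R => rescaled (fst w') (snd w')) (w, tau)).
{ intros [c' u'] tau Dc' u'_pos tau_in; simpl in *.
  apply (continuous_comp_2 (fun w' : (R * R) * R => fst (fst w'))
    (fun w' : (R * R) * R => (snd (fst w') - a) * snd w' + a) F); [continuity_R | continuity_R |].
  apply (F_cont c' ((u' - a) * tau + a)); [exact Dc' | nra]. }
assert (rescaled_int : forall w, D (fst w) -> 0 < snd w -> ex_RInt (rescaled w) 0 1).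
{ intros [c' u'] Dc' u'_pos; simpl in *.
  apply (@ex_RInt_continuous R_CompleteNormedModule); intros tau tau_in.
  apply (continuous_comp (fun tau => (u' - a) * tau + a) (F c')); [continuity_R |].
  apply continuous_param_slice; [exact Dc' |].
  rewrite Rmin_left, Rmax_right in tau_in by lra; nra. }
apply (continuous_ext_loc _ (fun w => (snd w - a) * RInt (rescaled w) 0 1)).
- refine (filter_imp _ _ _ near_dom); intros [c' u'] [Dc' u'_pos]; simpl in *.
  transitivity (RInt (fun tau => (u' - a) * F c' ((u' - a) * tau + a)) 0 1).
  + symmetry; exact (RInt_scal (V := R_CompleteNormedModule) (rescaled (c', u')) 0 1 (u' - a)
      (rescaled_int (c', u') Dc' u'_pos)).
  + assert (E := RInt_comp_lin (V := R_CompleteNormedModule) (F c') (u' - a) a 0 1).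
    replace ((u' - a) * 0 + a) with a in E by ring; replace ((u' - a) * 1 + a) with u' in E by ring.
    exact (E (ex_RInt_param_slice c' a u' Dc' a_pos u'_pos)).
- apply continuous_Rmult; [continuity_R |].
  apply continuous_RInt_param; [lra | intros tau tau_in; now apply rescaled_cont |].
  refine (filter_imp _ _ _ near_dom); intros w [Dw w_pos]; now apply rescaled_int.
Qed.

End IntegralWithParameter.

Section DifferentiationUnderIntegral.

Variables (D : R -> Prop) (F dF : R -> R -> R) (h dh : R -> R).
Hypothesis F_cont : forall c s, D c -> 0 < s ->
  continuous (fun w : R * R => F (fst w) (snd w)) (c, s).
Hypothesis dF_cont : forall c s, D c -> 0 < s ->
  continuous (fun w : R * R => dF (fst w) (snd w)) (c, s).
Hypothesis F_derive : forall c s, D c -> 0 < s -> is_derive (fun c => F c s) c (dF c s).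
Hypothesis h_derive : forall t, is_derive h t (dh t).
Hypothesis dh_cont : forall t, continuous dh t.

Lemma is_derive_param_comp t s : D (h t) -> 0 < s ->
  is_derive (fun u => F (h u) s) t (dh t * dF (h t) s).
Proof.
intros Dht s_pos; apply (is_derive_comp (fun c => F c s) h); [now apply F_derive | apply h_derive].
Qed.

Lemma continuity_2d_Derive_param_comp t s : locally t (fun u => D (h u)) -> 0 < s ->
  continuity_2d_pt (fun u v => Derive (fun z => F (h z) v) u) t s.
Proof.
intros D_near s_pos; apply continuity_2d_pt_filterlim.
change (continuous (fun w : R * R => Derive (fun z => F (h z) (snd w)) (fst w)) (t, s)).
apply (continuous_ext_loc _ (fun w : R * R => dh (fst w) * dF (h (fst w)) (snd w))).
- apply (filter_imp (fun w : R * R => D (h (fst w)) /\ 0 < snd w));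
    [| apply (locally_pair (fun u => D (h u)) (fun v => 0 < v)); [exact D_near | now apply open_gt]].
  intros [u v] [Dhu v_pos]; symmetry; apply is_derive_unique; now apply is_derive_param_comp.
- apply continuous_Rmult.
  + apply (continuous_comp fst dh); [apply continuous_fst | apply dh_cont].
  + apply (continuous_comp_2 (fun w : R * R => h (fst w)) snd dF);
      [| apply continuous_snd | apply dF_cont; [apply (locally_singleton _ _ D_near) | exact s_pos]].
    apply (continuous_comp fst h); [apply continuous_fst |].
    exact (ex_derive_continuous h _ (ex_intro _ _ (h_derive _))).
Qed.

Lemma locally_ex_RInt_param_comp t0 lo hi : locally t0 (fun t => D (h t)) -> 0 < lo -> 0 < hi ->
  locally t0 (fun t => ex_RInt (F (h t)) lo hi).
Proof.
intros D_near lo_pos hi_pos; refine (filter_imp _ _ _ D_near); intros t Dht.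
now apply (ex_RInt_param_slice D F F_cont).
Qed.

Lemma locally_2d_continuity_2d_Derive_param_comp t0 s : locally t0 (fun t => D (h t)) -> 0 < s ->
  locally_2d (fun u v => continuity_2d_pt (fun u v => Derive (fun z => F (h z) v) u) u v) t0 s.
Proof.
intros D_near s_pos; apply locally_2d_locally.
apply (filter_imp (fun w : R * R => locally (fst w) (fun u => D (h u)) /\ 0 < snd w)).
- intros w [D_near_w w_pos]; now apply continuity_2d_Derive_param_comp.
- apply (locally_pair (fun t => locally t (fun u => D (h u))) (fun v => 0 < v));
    [now apply locally_locally | now apply open_gt].
Qed.

Lemma RInt_Derive_param_comp t0 a u : D (h t0) -> 0 < a -> 0 < u ->
  RInt (fun s => Derive (fun z => F (h z) s) t0) a u = dh t0 * RInt (dF (h t0)) a u.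
Proof.
intros Dht0 a_pos u_pos; rewrite (RInt_ext _ (fun s => dh t0 * dF (h t0) s)).
- exact (RInt_scal (V := R_CompleteNormedModule) (dF (h t0)) a u (dh t0)
    (ex_RInt_param_slice D dF dF_cont _ _ _ Dht0 a_pos u_pos)).
- intros s [s_lo _]; apply is_derive_unique, is_derive_param_comp; [exact Dht0 |].
  assert (0 < Rmin a u) by (apply Rmin_pos; assumption); lra.
Qed.

Lemma is_derive_RInt_param_comp (g : R -> R) (dg a t0 : R) : 0 < a -> 0 < g t0 ->
  is_derive g t0 dg -> locally t0 (fun t => D (h t)) ->
  is_derive (fun t => RInt (F (h t)) a (g t)) t0
    (dh t0 * RInt (dF (h t0)) a (g t0) + F (h t0) (g t0) * dg).
Proof.
intros a_pos g_pos g_derive D_near.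
assert (Dht0 := locally_singleton _ _ D_near).
assert (near_int_around : forall s, 0 < s ->
  exists eps : posreal, locally t0 (fun t => ex_RInt (F (h t)) (s - eps) (s + eps))).
{ intros s s_pos; exists (mkposreal (s / 2) ltac:(lra)).
  apply locally_ex_RInt_param_comp; [exact D_near | simpl; lra | simpl; lra]. }
assert (m_pos : 0 < Rmin a (g t0)) by (apply Rmin_pos; assumption).
assert (m_le : Rmin a (g t0) <= a /\ Rmin a (g t0) <= g t0) by (split; [apply Rmin_l | apply Rmin_r]).
rewrite <- (RInt_Derive_param_comp t0 a (g t0)) by assumption.
replace (F (h t0) (g t0) * dg) with (- F (h t0) a * 0 + F (h t0) (g t0) * dg) by ring.
rewrite <- Rplus_assoc.
apply (is_derive_RInt_param_bound_comp (fun t s => F (h t) s) (fun _ => a) g t0 0 dg).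
- now apply locally_ex_RInt_param_comp.
- now apply near_int_around.
- now apply near_int_around.
- auto_derive; auto.
- exact g_derive.
- exists (pos_div_2 (mkposreal _ m_pos)); refine (filter_imp _ _ _ D_near).
  intros t Dht s [s_lo _]; eexists; apply is_derive_param_comp; [exact Dht |]; simpl in s_lo.
  assert (0 < Rmin (a - Rmin a (g t0) / 2) (g t0 - Rmin a (g t0) / 2)) by (apply Rmin_pos; lra).
  lra.
- intros s s_in; apply continuity_2d_Derive_param_comp; [exact D_near | lra].
- now apply locally_2d_continuity_2d_Derive_param_comp.
- now apply locally_2d_continuity_2d_Derive_param_comp.
- apply continuity_pt_filterlim, (continuous_param_slice D F F_cont); assumption.
- apply continuity_pt_filterlim, (continuous_param_slice D F F_cont); assumption.
Qed.

End DifferentiationUnderIntegral.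

Definition x_pos_y_neg (q : pt3) : Prop := 0 < fst (fst q) /\ snd (fst q) < 0.

Lemma open_x_pos_y_neg : open x_pos_y_neg.
Proof.
intros [[x y] z] [x_pos y_neg]; simpl in *.
apply (filter_imp (fun q : pt3 => (0 < fst (fst q) /\ snd (fst q) < 0) /\ True));
  [intros q [q_in _]; exact q_in |].
apply (locally_pair (fun xy : R * R => 0 < fst xy /\ snd xy < 0) (fun _ => True));
  [| apply filter_true].
apply (locally_pair (fun u => 0 < u) (fun v => v < 0)); [now apply open_gt | now apply open_lt].
Qed.

Lemma hfun_psi b x y z : hfun b 1 x y = exp (RInt (psi b (H1 x y z)) 1 x).
Proof.
unfold hfun; f_equal; apply RInt_ext; intros s _; unfold psi, Wc, H1.
replace (x * y * exp (s - x - y)) with (x * y * exp (- x - y) * exp s); [reflexivity |].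
rewrite Rmult_assoc, <- exp_plus; do 2 f_equal; ring.
Qed.

Lemma is_derive_mult_exp (f : R -> R) z t df :
  is_derive f t df -> is_derive (fun u => z * exp (f u)) t (z * exp (f t) * df).
Proof.
intros f_derive; rewrite Rmult_assoc, (Rmult_comm (exp (f t))).
apply (is_derive_scal (fun u => exp (f u))), (is_derive_comp exp f); [| exact f_derive].
auto_derive; auto; ring_R.
Qed.

Lemma is_derive_RInt_psi_x b x y z : 0 < x -> y < 0 ->
  is_derive (fun t => RInt (psi b (H1 t y z)) 1 t) x
    (y * exp (- x - y) * (1 - x) * RInt (dpsi b (H1 x y z)) 1 x + psi b (H1 x y z) x).
Proof.
intros x_pos y_neg; rewrite <- (Rmult_1_r (psi b (H1 x y z) x)).
apply (is_derive_RInt_param_comp (fun c => c < 0) (psi b) (dpsi b) (fun t => H1 t y z)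
  (fun t => y * exp (- t - y) * (1 - t))).
- intros; now apply continuous_psi.
- intros; now apply continuous_dpsi.
- intros; now apply is_derive_psi.
- intros t; apply is_derive_H1_x.
- intros t; continuity_R.
- lra.
- exact x_pos.
- auto_derive; auto.
- refine (filter_imp _ _ _ (open_gt 0 x x_pos)); intros t t_pos; now apply H1_neg.
Qed.

Lemma is_derive_RInt_psi_y b x y z : 0 < x -> y < 0 ->
  is_derive (fun t => RInt (psi b (H1 x t z)) 1 x) y
    (x * exp (- x - y) * (1 - y) * RInt (dpsi b (H1 x y z)) 1 x).
Proof.
intros x_pos y_neg.
rewrite <- (Rplus_0_r (_ * RInt _ 1 x)), <- (Rmult_0_r (psi b (H1 x y z) x)).
apply (is_derive_RInt_param_comp (fun c => c < 0) (psi b) (dpsi b) (fun t => H1 x t z)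
  (fun t => x * exp (- x - t) * (1 - t))).
- intros; now apply continuous_psi.
- intros; now apply continuous_dpsi.
- intros; now apply is_derive_psi.
- intros t; apply is_derive_H1_y.
- intros t; continuity_R.
- lra.
- exact x_pos.
- auto_derive; auto.
- refine (filter_imp _ _ _ (open_lt 0 y y_neg)); intros t t_neg; now apply H1_neg.
Qed.

Lemma continuous_at_H1_x (k : R -> R -> R) x y z :
  continuous (fun w : R * R => k (fst w) (snd w)) (H1 x y z, x) ->
  continuous (at3 (fun x y z => k (H1 x y z) x)) (x, y, z).
Proof.
intros k_cont; unfold at3.
apply (continuous_comp_2 (at3 H1) (fun q : pt3 => fst (fst q)) k); [| continuity_R | exact k_cont].
unfold at3, H1; continuity_R.
Qed.

Lemma H2_first_integral_on b : 0 < b ->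
  first_integral_on x_pos_y_neg Px Qy (Sz b) (fun x y z => z * hfun b 1 x y).
Proof.
intros b_pos.
set (G := fun x y z => RInt (psi b (H1 x y z)) 1 x : R).
set (J := fun x y z => RInt (dpsi b (H1 x y z)) 1 x : R).
assert (hfun_G : forall x y z, hfun b 1 x y = exp (G x y z)) by (intros; apply hfun_psi).
apply (first_integral_on_intro _ _ _ _ _
  (fun x y z => z * exp (G x y z) * (y * exp (- x - y) * (1 - x) * J x y z + psi b (H1 x y z) x))
  (fun x y z => z * exp (G x y z) * (x * exp (- x - y) * (1 - y) * J x y z))
  (fun x y z => exp (G x y z))).
- exact open_x_pos_y_neg.
- intros x y z [x_pos y_neg]; simpl in x_pos, y_neg; split; [| split].
  + apply (is_derive_ext (fun t => z * exp (G t y z))); [intros t; now rewrite (hfun_G t y z) |].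
    apply (is_derive_mult_exp (fun t => G t y z)); unfold G, J; now apply is_derive_RInt_psi_x.
  + apply (is_derive_ext (fun t => z * exp (G x t z))); [intros t; now rewrite (hfun_G x t z) |].
    apply (is_derive_mult_exp (fun t => G x t z)); unfold G, J; now apply is_derive_RInt_psi_y.
  + apply (is_derive_ext (fun t => t * exp (G x y z))); [intros t; now rewrite (hfun_G x y z) |].
    auto_derive; auto; ring_R.
- intros [[x y] z] [x_pos y_neg]; simpl in x_pos, y_neg.
  assert (H1_neg' := H1_neg x y z x_pos y_neg).
  assert (G_cont : continuous (at3 G) (x, y, z))
    by (apply (continuous_at_H1_x (fun c u => RInt (psi b c) 1 u)),
          (continuous_RInt_param_bound (fun c => c < 0)); auto using open_lt, continuous_psi; lra).
  assert (J_cont : continuous (at3 J) (x, y, z))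
    by (apply (continuous_at_H1_x (fun c u => RInt (dpsi b c) 1 u)),
          (continuous_RInt_param_bound (fun c => c < 0)); auto using open_lt, continuous_dpsi; lra).
  assert (psi_cont : continuous (at3 (fun x y z => psi b (H1 x y z) x)) (x, y, z))
    by (apply (continuous_at_H1_x (psi b)), continuous_psi; assumption).
  unfold at3 in *; repeat split; continuity_R; assumption.
- exists (1, -1, 0), (1, -1, 1); unfold x_pos_y_neg, at3; simpl; repeat split; try lra.
  rewrite Rmult_0_l, Rmult_1_l; apply Rlt_not_eq, exp_pos.
- intros x y z [x_pos y_neg]; simpl in x_pos, y_neg.
  transitivity (z * exp (G x y z) * (J x y z * (Px x y z * (y * exp (- x - y) * (1 - x))
    + Qy x y z * (x * exp (- x - y) * (1 - y))) + Px x y z * psi b (H1 x y z) x - b));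
    [unfold Sz; ring |].
  rewrite Px_H1x_plus_Qy_H1y, Px_psi_H1_diag by assumption; ring.
Qed.

Theorem theorem1p3 (b : R) (hb : 0 <= b) :
  (b = 0 ->
     first_integral_on (fun _ => True) Px Qy (Sz b) H1 /\
     first_integral_on (fun _ => True) Px Qy (Sz b) (fun x y z => z) /\
     darboux_type_on 2 (fun _ => True) Px Qy (Sz b) H1 /\
     darboux_type_on 2 (fun _ => True) Px Qy (Sz b) (fun x y z => z)) /\
  (0 < b ->
     exists (U : pt3 -> Prop) (x0 : R),
       first_integral_on U Px Qy (Sz b) H1 /\
       first_integral_on U Px Qy (Sz b) (fun x y z => z * hfun b x0 x y)).
Proof.
split.
- intros ->; split; [| split; [exact z_first_integral | split; [apply H1_darboux_type | apply z_darboux_type]]].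
  apply H1_first_integral_on; [apply open_true |].
  exists (1, -1, 0), (2, -2, 0); split; [exact I | split; [exact I | exact H1_takes_two_values]].
- intros b_pos; exists x_pos_y_neg, 1; split; [| exact (H2_first_integral_on b b_pos)].
  apply H1_first_integral_on; [exact open_x_pos_y_neg |].
  exists (1, -1, 0), (2, -2, 0); unfold x_pos_y_neg; simpl.
  split; [lra | split; [lra | exact H1_takes_two_values]].
Qed.
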